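(* Let $G$ be a graph with $n$ vertices and $m$ edges such that $\omega(G)=\chi(G)$ (i.e. $G$ is weakly perfect), and write $\omega=\omega(G)$. Let $\mu_1\ge\mu_2\ge\cdots\ge\mu_n$ be the eigenvalues of the adjacency matrix of $G$, let $n^+$ be the number of positive eigenvalues, and let $\ell=\min(n^+,\omega)$. Then \[ \mu_1^2+\mu_2^2+\cdots+\mu_\ell^2\le \frac{2m(\omega-1)}{\omega}. \]
   Context: $\omega(G)$ denotes the clique number and $\chi(G)$ the chromatic number of $G$. Eigenvalues are those of the adjacency matrix. An empty sum (when $\ell=0$) equals $0$. *)

From mathcomp Require Import all_boot all_order all_algebra.
Set Implicit Arguments. Unset Strict Implicit. Unset Printing Implicit Defensive.
Import Order.TTheory GRing.Theory Num.Theory.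

Definition simple_graph (T : finType) (e : rel T) : Prop :=
  symmetric e /\ irreflexive e.

Definition num_edges (T : finType) (e : rel T) : nat :=
  #|[set [set x; y] | x in T, y in T & e x y]|.

Definition is_clique (T : finType) (e : rel T) (K : {set T}) : bool :=
  [forall x in K, forall y in K, (x != y) ==> e x y].

Definition clique_number (T : finType) (e : rel T) : nat :=
  \max_(K : {set T} | is_clique e K) #|K|.

Definition colorable (T : finType) (e : rel T) (k : nat) : bool :=
  [exists f : {ffun T -> 'I_k}, [forall x, forall y, e x y ==> (f x != f y)]].

Lemma colorable_exists (T : finType) (e : rel T) (irr : irreflexive e) :
  exists k, colorable e k.
Proof.
exists #|T|; apply/existsP; exists [ffun x => enum_rank x].
apply/forallP => x; apply/forallP => y; apply/implyP => exy.
rewrite !ffunE; apply/negP => /eqP /enum_rank_inj Exy.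
by move: exy; rewrite Exy irr.
Qed.

Definition chromatic_number (T : finType) (e : rel T) (irr : irreflexive e) : nat :=
  ex_minn (colorable_exists irr).

Definition adj_matrix (R : nzRingType) (T : finType) (e : rel T) : 'M[R]_#|T| :=
  \matrix_(i, j) ((e (enum_val i) (enum_val j))%:R)%R.

Definition sorted_eigenvalues (R : rcfType) (n : nat) (A : 'M[R]_n) (s : seq R) : Prop :=
  (char_poly A = \prod_(x <- s) ('X - x%:P))%R /\ sorted (fun x y : R => y <= x)%R s.

From mathcomp Require Import all_boot all_order all_algebra.
From mathcomp Require Import complex.
From mathcomp Require Import ring lra.
Set Implicit Arguments. Unset Strict Implicit. Unset Printing Implicit Defensive.
Import Order.TTheory GRing.Theory Num.Theory Num.Def.
Local Open Scope complex_scope.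
Local Open Scope ring_scope.

(* Let s+ and s- be the sums of the squares of the positive and of the negative
   eigenvalues of the adjacency matrix A, so that s+ + s- = ||A||^2 = 2m.  Split
   A = P - N into its positive and negative parts: P N = 0, hence ||P||^2 = s+,
   ||N||^2 = s- and <P, N> = 0.  Given a proper colouring with k colours, A
   vanishes on the diagonal blocks of the colour partition, so P and N agree
   there.  Writing P = Z^* Z and splitting the columns of Z along the colour
   classes, ||P||^2 = ||Z Z^*||^2 = ||sum_a Z_a Z_a^*||^2 <= k sum_a ||P_aa||^2
   by Cauchy-Schwarz.  Together with <P, N> = 0 and
   ||P_off + (k - 1) N_off||^2 >= 0 this gives Ando and Lin's inequality
   s+ <= (k - 1) s-, i.e. k s+ <= (k - 1) 2m.  For k = omega = chi it remains
   to note that the l leading eigenvalues are positive, so that the sum of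
   their squares is at most s+. *)

Lemma sqr_sum_le (R : realFieldType) k (u : 'I_k -> R) :
  (\sum_a u a) ^+ 2 <= k%:R * \sum_a u a ^+ 2.
Proof.
have spread_ge0 : 0 <= \sum_a \sum_b (u a - u b) ^+ 2.
  by do 2![apply: sumr_ge0 => ? _]; apply: sqr_ge0.
suff : \sum_a \sum_b (u a - u b) ^+ 2
       = 2 * (k%:R * \sum_a u a ^+ 2) - 2 * (\sum_a u a) ^+ 2 by lra.
transitivity (\sum_a \sum_b (u a ^+ 2 + u b ^+ 2 + (-2) * (u a * u b))).
  by apply: eq_bigr => a _; apply: eq_bigr => b _; ring.
under eq_bigr => a _ do rewrite !big_split /= sumr_const card_ord -mulr_sumr.
rewrite !big_split /= sumr_const card_ord -mulr_sumr -big_distrlr /= -expr2.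
by rewrite sumrMnl -mulr_natl; ring.
Qed.

Section SquaredModulus.
Variable R : rcfType.
Implicit Types (x y : R[i]) (t : R).
Local Notation Re := (@complex.Re R).
Local Notation Im := (@complex.Im R).

Definition sqnormc x : R := Re x ^+ 2 + Im x ^+ 2.
Definition dotc x y : R := Re x * Re y + Im x * Im y.

Lemma Re_conjCM x y : Re (conjC x * y) = dotc x y.
Proof. by case: x => a b; case: y => c d; rewrite /dotc /=; ring. Qed.

Lemma dotcc x : dotc x x = sqnormc x.
Proof. by rewrite /dotc /sqnormc !expr2. Qed.

Lemma sqnormc_ge0 x : 0 <= sqnormc x.
Proof. by rewrite addr_ge0 ?sqr_ge0. Qed.

Lemma sqnormc_real t : sqnormc t%:C = t ^+ 2.
Proof. by rewrite /sqnormc /= expr0n addr0. Qed.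

Lemma conjC_real_complex t : conjC t%:C = t%:C.
Proof. exact: conjc_real. Qed.

Lemma sqnormcB x y : sqnormc (x - y) = sqnormc x - 2 * dotc x y + sqnormc y.
Proof. by case: x => a b; case: y => c d; rewrite /sqnormc /dotc /=; ring. Qed.

Lemma sqnormcDZ x y t :
  sqnormc (x + t%:C * y) = sqnormc x + 2 * t * dotc x y + t ^+ 2 * sqnormc y.
Proof. by case: x => a b; case: y => c d; rewrite /sqnormc /dotc /=; ring. Qed.

Lemma Re_sum I (r : seq I) (P : pred I) (F : I -> R[i]) :
  Re (\sum_(i <- r | P i) F i) = \sum_(i <- r | P i) Re (F i).
Proof. exact: (raddf_sum (Re : Rcomplex R -> R)). Qed.

Lemma Im_sum I (r : seq I) (P : pred I) (F : I -> R[i]) :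
  Im (\sum_(i <- r | P i) F i) = \sum_(i <- r | P i) Im (F i).
Proof. exact: (raddf_sum (Im : Rcomplex R -> R)). Qed.

Lemma sqnormc_sum_le k (x : 'I_k -> R[i]) :
  sqnormc (\sum_a x a) <= k%:R * \sum_a sqnormc (x a).
Proof. by rewrite /sqnormc Re_sum Im_sum big_split mulrDr lerD ?sqr_sum_le. Qed.

End SquaredModulus.

Section GramBlocks.
Variables (R : rcfType) (n : nat).
Implicit Types (Z W : 'M[R[i]]_n) (S : pred 'I_n).

(* [gram Z] is [Z^* Z]; [rowdot S Z W] is [Z_S W_S^*], where [Z_S] keeps the
   columns of [Z] indexed by [S]. *)
Definition gram Z i j := \sum_s conjC (Z s i) * Z s j.
Definition rowdot S Z W r s := \sum_(i | S i) Z r i * conjC (W s i).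

Lemma sum_conj_gramM Z W S (S' : pred 'I_n) :
  \sum_(i | S i) \sum_(j | S' j) conjC (gram Z i j) * gram W i j =
  \sum_r \sum_s rowdot S Z W r s * conjC (rowdot S' Z W r s).
Proof.
transitivity (\sum_(i | S i) \sum_(j | S' j) \sum_r \sum_s
               Z r i * conjC (W s i) * conjC (Z r j * conjC (W s j))).
  apply: eq_bigr => i _; apply: eq_bigr => j _.
  rewrite rmorph_sum big_distrlr; apply: eq_bigr => r _; apply: eq_bigr => s _.
  by rewrite !rmorphM /= !conjCK; ring.
under eq_bigr => i _ do rewrite exchange_big /=.
rewrite exchange_big /=; apply: eq_bigr => r _.
under eq_bigr => i _ do rewrite exchange_big /=.
rewrite exchange_big /=; apply: eq_bigr => s _.
by rewrite rmorph_sum big_distrlr.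
Qed.

Lemma sum_sqnormc_gram Z S :
  \sum_(i | S i) \sum_(j | S j) sqnormc (gram Z i j) =
  \sum_r \sum_s sqnormc (rowdot S Z Z r s).
Proof.
have sqnormcE x : sqnormc x = complex.Re (conjC x * x) by rewrite Re_conjCM dotcc.
transitivity (complex.Re (\sum_(i | S i) \sum_(j | S j) conjC (gram Z i j) * gram Z i j)).
  rewrite Re_sum; apply: eq_bigr => i _; rewrite Re_sum.
  by apply: eq_bigr => j _; rewrite sqnormcE.
rewrite sum_conj_gramM Re_sum; apply: eq_bigr => r _; rewrite Re_sum.
by apply: eq_bigr => s _; rewrite mulrC sqnormcE.
Qed.

Lemma sum_sqnormc_gram_le_blocks k (col : 'I_n -> 'I_k) Z :
  \sum_i \sum_j sqnormc (gram Z i j) <=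
  k%:R * \sum_i \sum_(j | col j == col i) sqnormc (gram Z i j).
Proof.
have -> : \sum_i \sum_(j | col j == col i) sqnormc (gram Z i j) =
          \sum_(a < k) \sum_(i | col i == a) \sum_(j | col j == a) sqnormc (gram Z i j).
  rewrite (partition_big col predT) //=; apply: eq_bigr => a _.
  by apply: eq_bigr => i /eqP <-.
under [X in _ <= _ * X]eq_bigr => a _ do rewrite sum_sqnormc_gram.
rewrite (sum_sqnormc_gram Z predT).
rewrite [X in _ <= _ * X]exchange_big mulr_sumr; apply: ler_sum => r _.
rewrite [X in _ <= _ * X]exchange_big mulr_sumr; apply: ler_sum => s _.
by rewrite /rowdot (partition_big col predT) //= sqnormc_sum_le.
Qed.

End GramBlocks.

Lemma sumr2_lincomb (R : pzSemiRingType) (I J : finType) (D : I -> pred J)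
    (f g h : I -> J -> R) (a b : R) :
  \sum_i \sum_(j | D i j) (f i j + a * g i j + b * h i j) =
  \sum_i \sum_(j | D i j) f i j + a * \sum_i \sum_(j | D i j) g i j
    + b * \sum_i \sum_(j | D i j) h i j.
Proof.
rewrite !mulr_sumr -!big_split; apply: eq_bigr => i _.
by rewrite !mulr_sumr -!big_split.
Qed.

Lemma ando_lin_arith (R : realFieldType) (k d p q : R) :
  1 <= k -> 0 <= d -> 0 <= p -> 0 <= q -> (k = 1 -> d = 0) ->
  d + p <= k * d -> 0 <= p - 2 * (k - 1) * d + (k - 1) ^+ 2 * q ->
  d + p <= (k - 1) * (d + q).
Proof.
move=> k_ge1 d_ge0 p_ge0 q_ge0 k1_d0 block off.
have [k1|k_neq1] := eqVneq k 1.
  by move: block; rewrite k1 k1_d0 //; lra.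
have K_gt0 : 0 < k - 1 by rewrite lt_neqAle subr_ge0 k_ge1 andbT eq_sym subr_eq0.
have : (k - 1) * d <= (k - 1) * ((k - 1) * q) by nra.
rewrite ler_pM2l // => d_le; nra.
Qed.

Section AndoLin.
Variables (R : rcfType) (n k : nat).
Variables (Q : 'M[R[i]]_n) (L : 'I_n -> R) (A : 'M[R]_n) (col : 'I_n -> 'I_k).
Hypothesis Q_orthonormal : forall r s, \sum_i Q r i * conjC (Q s i) = (r == s)%:R.
Hypothesis A_spectral :
  forall i j, (A i j)%:C = \sum_r conjC (Q r i) * (L r)%:C * Q r j.
Hypothesis A_colour_blocks : forall i j, col i = col j -> A i j = 0.
Hypothesis k_gt0 : (0 < k)%N.

Let scaled_rows (a : 'I_n -> R) : 'M[R[i]]_n := \matrix_(r, i) ((a r)%:C * Q r i).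

Lemma rowdot_scaled_rows a b r s :
  rowdot predT (scaled_rows a) (scaled_rows b) r s = (a r * b s)%:C * (r == s)%:R.
Proof.
rewrite /rowdot -Q_orthonormal mulr_sumr; apply: eq_bigr => i _.
by rewrite !mxE !rmorphM /= conjC_real_complex; ring.
Qed.

Lemma sum_dotc_gram_scaled_rows a b :
  \sum_i \sum_j dotc (gram (scaled_rows a) i j) (gram (scaled_rows b) i j) =
  \sum_r (a r * b r) ^+ 2.
Proof.
transitivity (complex.Re (\sum_i \sum_j
    conjC (gram (scaled_rows a) i j) * gram (scaled_rows b) i j)).
  rewrite Re_sum; apply: eq_bigr => i _; rewrite Re_sum.
  by apply: eq_bigr => j _; rewrite Re_conjCM.
rewrite sum_conj_gramM Re_sum; apply: eq_bigr => r _.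
rewrite Re_sum (bigD1 r) //= big1 => [|s]; last first.
  by rewrite !rowdot_scaled_rows eq_sym => /negbTE ->; rewrite mulr0 mul0r.
by rewrite addr0 !rowdot_scaled_rows eqxx !mulr1 conjC_real_complex -rmorphM /= expr2.
Qed.

(* [P] and [N] are the positive and negative parts of [A]. *)
Let pos_sqrt r := Num.sqrt (Num.max (L r) 0).
Let neg_sqrt r := Num.sqrt (Num.max (- L r) 0).
Local Notation P := (gram (scaled_rows pos_sqrt)).
Local Notation N := (gram (scaled_rows neg_sqrt)).

Lemma sqr_pos_sqrt r : pos_sqrt r ^+ 2 = Num.max (L r) 0.
Proof. by rewrite sqr_sqrtr // le_max lexx orbT. Qed.

Lemma sqr_neg_sqrt r : neg_sqrt r ^+ 2 = Num.max (- L r) 0.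
Proof. by rewrite sqr_sqrtr // le_max lexx orbT. Qed.

Lemma pos_sqrtM_neg_sqrt r : pos_sqrt r * neg_sqrt r = 0.
Proof.
rewrite /pos_sqrt /neg_sqrt -sqrtrM ?le_max ?lexx ?orbT //.
have [L_ge0|L_lt0] := lerP 0 (L r); last by rewrite mul0r sqrtr0.
by rewrite (max_r (_ : - L r <= 0)) ?mulr0 ?sqrtr0 // oppr_le0.
Qed.

Lemma sum_sqnormc_pos :
  \sum_i \sum_j sqnormc (P i j) = \sum_r Num.max (L r) 0 ^+ 2.
Proof.
under eq_bigr do under eq_bigr do rewrite -dotcc.
by rewrite sum_dotc_gram_scaled_rows; under eq_bigr do rewrite -expr2 sqr_pos_sqrt.
Qed.

Lemma sum_sqnormc_neg :
  \sum_i \sum_j sqnormc (N i j) = \sum_r Num.max (- L r) 0 ^+ 2.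
Proof.
under eq_bigr do under eq_bigr do rewrite -dotcc.
by rewrite sum_dotc_gram_scaled_rows; under eq_bigr do rewrite -expr2 sqr_neg_sqrt.
Qed.

Lemma sum_dotc_pos_neg : \sum_i \sum_j dotc (P i j) (N i j) = 0.
Proof.
by rewrite sum_dotc_gram_scaled_rows big1 // => r _; rewrite pos_sqrtM_neg_sqrt expr0n.
Qed.

Lemma spectral_gramB i j : (A i j)%:C = P i j - N i j.
Proof.
rewrite A_spectral /gram -sumrB; apply: eq_bigr => r _.
rewrite !mxE !rmorphM /= !conjC_real_complex.
have -> : L r = pos_sqrt r ^+ 2 - neg_sqrt r ^+ 2.
  rewrite sqr_pos_sqrt sqr_neg_sqrt; have [L_ge0|L_lt0] := lerP 0 (L r).
    by rewrite (max_r (_ : - L r <= 0)) ?subr0 // oppr_le0.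
  by rewrite (max_l (_ : 0 <= - L r)) ?sub0r ?opprK // oppr_ge0 ltW.
by rewrite rmorphB /= !rmorphXn /=; ring.
Qed.

Lemma gram_pos_neg_block i j : col i = col j -> P i j = N i j.
Proof. by move=> /A_colour_blocks A0; apply/eqP; rewrite -subr_eq0 -spectral_gramB A0. Qed.

Lemma sum_sqr_spectral :
  \sum_i \sum_j A i j ^+ 2 =
  \sum_r Num.max (L r) 0 ^+ 2 + \sum_r Num.max (- L r) 0 ^+ 2.
Proof.
transitivity (\sum_i \sum_j
    (sqnormc (P i j) + (-2) * dotc (P i j) (N i j) + 1 * sqnormc (N i j))).
  apply: eq_bigr => i _; apply: eq_bigr => j _.
  by rewrite -sqnormc_real spectral_gramB sqnormcB mul1r mulNr.
by rewrite sumr2_lincomb sum_dotc_pos_neg mulr0 addr0 mul1r sum_sqnormc_pos sum_sqnormc_neg.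
Qed.

Theorem ando_lin :
  \sum_r Num.max (L r) 0 ^+ 2 <= (k%:R - 1) * \sum_r Num.max (- L r) 0 ^+ 2.
Proof.
set d := \sum_i \sum_(j | col j == col i) sqnormc (P i j).
set p := \sum_i \sum_(j | col j != col i) sqnormc (P i j).
set q := \sum_i \sum_(j | col j != col i) sqnormc (N i j).
set c := \sum_i \sum_(j | col j != col i) dotc (P i j) (N i j).
have split_blocks (F : 'I_n -> 'I_n -> R) : \sum_i \sum_j F i j =
    \sum_i \sum_(j | col j == col i) F i j + \sum_i \sum_(j | col j != col i) F i j.
  by rewrite -big_split; apply: eq_bigr => i _; rewrite (bigID (fun j => col j == col i)).
have pos_dp : \sum_r Num.max (L r) 0 ^+ 2 = d + p.
  by rewrite -sum_sqnormc_pos split_blocks.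
have neg_dq : \sum_r Num.max (- L r) 0 ^+ 2 = d + q.
  rewrite -sum_sqnormc_neg split_blocks; congr (_ + _).
  by apply: eq_bigr => i _; apply: eq_bigr => j /eqP ji; rewrite gram_pos_neg_block.
have c_d : c = - d.
  have := sum_dotc_pos_neg; rewrite split_blocks addrC => /eqP; rewrite addr_eq0.
  move=> /eqP; rewrite -/c => ->; congr (- _).
  apply: eq_bigr => i _; apply: eq_bigr => j /eqP ji.
  by rewrite gram_pos_neg_block // dotcc.
have block_bound : d + p <= k%:R * d.
  by rewrite -pos_dp -sum_sqnormc_pos; apply: sum_sqnormc_gram_le_blocks.
have off_ge0 : 0 <= p + 2 * (k%:R - 1) * c + (k%:R - 1) ^+ 2 * q.
  rewrite -sumr2_lincomb; do 2![apply: sumr_ge0 => ? _].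
  by rewrite -sqnormcDZ sqnormc_ge0.
(* With a single colour there are no off-block entries, so [d = - c = 0]. *)
have k1_d0 : k%:R = 1 :> R -> d = 0.
  move=> /eqP; rewrite pnatr_eq1 => /eqP k1; apply/eqP; rewrite -oppr_eq0 -c_d.
  apply/eqP/big1 => i _; apply: big1 => j; suff -> : col j = col i by rewrite eqxx.
  have : (col j < 1)%N && (col i < 1)%N by rewrite -k1 !ltn_ord.
  by rewrite !ltnS !leqn0 => /andP[/eqP cj /eqP ci]; apply: val_inj; rewrite /= cj ci.
rewrite pos_dp neg_dq; apply: ando_lin_arith => //.
- by rewrite ler1n.
- by do 2![apply: sumr_ge0 => ? _]; apply: sqnormc_ge0.
- by do 2![apply: sumr_ge0 => ? _]; apply: sqnormc_ge0.
- by do 2![apply: sumr_ge0 => ? _]; apply: sqnormc_ge0.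
- by move: off_ge0; rewrite c_d mulrN.
Qed.

End AndoLin.

Lemma char_poly_similar (F : fieldType) n (Q D : 'M[F]_n) : Q \in unitmx ->
  char_poly (invmx Q *m D *m Q) = char_poly D.
Proof.
move=> Q_unit; rewrite /char_poly /char_poly_mx.
set Qi := map_mx polyC (invmx Q); set Qp := map_mx polyC Q.
have QiQp : Qi *m Qp = 1%:M by rewrite -map_mxM mulVmx // map_mx1.
have XE : ('X%:M : 'M[{poly F}]_n) = Qi *m 'X%:M *m Qp.
  by rewrite scalar_mxC -mulmxA QiQp mulmx1.
rewrite !map_mxM -/Qi -/Qp {1}XE -mulmxBl -mulmxBr !det_mulmx mulrC mulrA -det_mulmx.
by rewrite [Qp *m Qi]mulmx1C ?det1 ?mul1r.
Qed.

Lemma symmetric_spectral (R : rcfType) n (A : 'M[R]_n) (mu : seq R) :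
  A^T = A -> char_poly A = \prod_(x <- mu) ('X - x%:P) ->
  exists (Q : 'M[R[i]]_n) (L : 'I_n -> R),
    [/\ forall r s, \sum_i Q r i * conjC (Q s i) = (r == s)%:R,
        forall i j, (A i j)%:C = \sum_r conjC (Q r i) * (L r)%:C * Q r j
      & perm_eq mu [seq L r | r : 'I_n]].
Proof.
move=> A_sym charA.
pose AC := map_mx (real_complex R) A.
have AC_herm : AC \is hermsymmx.
  apply/is_hermitianmxP; apply/matrixP => i j.
  by rewrite !mxE expr0 mul1r conjC_real_complex -[in RHS]A_sym mxE.
move/orthomx_spectralP: (hermitian_normalmx AC_herm) => AC_spectral.
have Q_unitary := spectral_unitarymx AC.
set Q := spectralmx AC in AC_spectral Q_unitary.
set lam := spectral_diag AC in AC_spectral.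
have lamE r : (complex.Re (lam 0 r))%:C = lam 0 r.
  by apply: RRe_real; move/mxOverP: (hermitian_spectral_diag_real AC_herm); apply.
exists Q, (fun r => complex.Re (lam 0 r)); split.
- move=> r s; have /matrixP/(_ r s) := unitarymxP Q_unitary; rewrite !mxE => <-.
  by apply: eq_bigr => i _; rewrite !mxE.
- move=> i j; have /matrixP/(_ i j) := AC_spectral; rewrite mxE => ->.
  rewrite invmx_unitary // mul_mx_diag !mxE; apply: eq_bigr => r _.
  by rewrite !mxE lamE.
apply: (perm_map_inj (@complexI R)); apply: prod_XsubC_eq; rewrite !big_map.
rewrite -(map_prod_XsubC (real_complex R)) -charA map_char_poly -/AC AC_spectral.
rewrite char_poly_similar ?unitarymx_unit // char_poly_trig ?diag_mx_is_trig //.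
by apply: eq_bigr => r _; rewrite mxE eqxx mulr1n lamE.
Qed.

Lemma sorted_nth_gt0 (R : realDomainType) (s : seq R) i :
  sorted (fun x y : R => y <= x) s -> (i < count (fun x : R => (0 < x)%R) s)%N ->
  0 < nth 0 s i.
Proof.
elim: s i => [|x s IHs] [|i] //= s_sorted; last first.
  move=> lt_i; apply: IHs (path_sorted s_sorted) _.
  by rewrite -ltnS (leq_trans lt_i) // -add1n leq_add2r leq_b1.
have x_max : all (fun y => y <= x) s.
  exact: order_path_min (fun a b c ba cb => le_trans cb ba) s_sorted.
case: ltrP => //= x_le0; rewrite add0n -has_count => /hasP[y y_s y_gt0].
by have := lt_le_trans y_gt0 (le_trans (allP x_max y y_s) x_le0); rewrite ltxx.
Qed.

Lemma sum_sqr_prefix_le (R : realDomainType) (s : seq R) l :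
  sorted (fun x y : R => y <= x) s -> (l <= count (fun x : R => (0 < x)%R) s)%N ->
  \sum_(i < l) nth 0 s i ^+ 2 <= \sum_(x <- s) Num.max x 0 ^+ 2.
Proof.
move=> s_sorted l_le.
have l_size : (l <= size s)%N := leq_trans l_le (count_size _ _).
rewrite (big_nth 0) big_mkord (big_ord_widen _ (fun i => nth 0 s i ^+ 2) l_size).
rewrite [X in _ <= X](bigID (fun i : 'I_(size s) => (i < l)%N)) /=.
apply: ler_wpDr; first by apply: sumr_ge0 => i _; apply: sqr_ge0.
apply: ler_sum => i lt_il; rewrite max_l // ltW // sorted_nth_gt0 //.
exact: leq_trans lt_il l_le.
Qed.

Lemma eq_set2 (T : finType) (a b x y : T) : a != b -> x != y ->
  ([set a; b] == [set x; y]) = ((a, b) == (x, y)) || ((a, b) == (y, x)).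
Proof.
move=> ab xy; apply/idP/idP; last by case/orP => /eqP[-> ->] //; rewrite setUC.
move=> /eqP ab_xy; move: ab.
have := set21 a b; have := set22 a b; rewrite ab_xy !in_set2.
by case/orP => /eqP->; case/orP => /eqP->; rewrite ?eqxx ?orbT.
Qed.

Lemma handshake (T : finType) (e : rel T) : symmetric e -> irreflexive e ->
  (\sum_x \sum_y e x y)%N = (2 * num_edges e)%N.
Proof.
move=> sym irr; rewrite pair_big /= -big_mkcond /=.
rewrite (partition_big (fun p : T * T => [set p.1; p.2])
   (mem [set [set x; y] | x in T, y in T & e x y])) /=; last first.
  by move=> [x y] /= exy; apply/imset2P; exists x y; rewrite ?inE.
rewrite /num_edges mulnC -sum_nat_const.
apply: eq_bigr => S /imset2P[x y _]; rewrite inE /= => exy ->.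
have xy : x != y by apply: contraTneq exy => ->; rewrite irr.
have -> : 2%N = ((x, y) != (y, x)).+1 by rewrite xpair_eqE (negbTE xy).
rewrite -cards2 -sum1_card; apply: eq_bigl => -[a b] /=; rewrite in_set2.
case eab: (e a b) => /=.
  by rewrite eq_set2 //; apply: contraTneq eab => ->; rewrite irr.
apply/esym/negbTE/negP => /orP[] /eqP[ea eb]; subst a b; first by rewrite exy in eab.
by rewrite sym exy in eab.
Qed.

Lemma adj_matrix_tr (R : nzRingType) (T : finType) (e : rel T) :
  symmetric e -> (adj_matrix R e)^T = adj_matrix R e.
Proof. by move=> sym; apply/matrixP => i j; rewrite !mxE sym. Qed.

Lemma sum_sqr_adj_matrix (R : nzRingType) (T : finType) (e : rel T) :
  symmetric e -> irreflexive e ->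
  \sum_i \sum_j adj_matrix R e i j ^+ 2 = (2 * num_edges e)%:R.
Proof.
move=> sym irr; rewrite -handshake // natr_sum.
rewrite (big_enum_val (A := T) (fun x => (\sum_y e x y)%:R)) /=.
apply: eq_bigr => i _; rewrite natr_sum.
rewrite (big_enum_val (A := T) (fun y => (e (enum_val i) y)%:R)) /=.
by apply: eq_bigr => j _; rewrite mxE; case: (e _ _); rewrite ?expr0n ?expr1n.
Qed.

Lemma colorableP (T : finType) (e : rel T) k :
  colorable e k -> exists f : T -> 'I_k, forall x y, e x y -> f x != f y.
Proof.
move=> /existsP[f /forallP f_proper]; exists f => x y.
by have /forallP/(_ y)/implyP := f_proper x.
Qed.

Lemma chromatic_colorable (T : finType) (e : rel T) (irr : irreflexive e) :
  colorable e (chromatic_number irr).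
Proof. by rewrite /chromatic_number; case: ex_minnP. Qed.

Theorem mainTheorem1 (R : rcfType) (T : finType) (e : rel T)
    (sym : symmetric e) (irr : irreflexive e)
    (wp : clique_number e = chromatic_number irr)
    (mu : seq R) (hmu : sorted_eigenvalues (adj_matrix R e) mu) :
  let omega := clique_number e in
  let m := num_edges e in
  let npos := count (fun x : R => 0 < x) mu in
  let l := minn npos omega in
  \sum_(i < l) (nth 0 mu i) ^+ 2 <= (2 * m * (omega - 1))%:R / omega%:R.
Proof.
cbv zeta; set omega := clique_number e; set l := minn _ omega.
have [mu_char mu_sorted] := hmu.
have [omega0|omega_gt0] := posnP omega.
  by rewrite /l omega0 minn0 big_ord0 invr0 mulr0.
have /colorableP[f f_proper] : colorable e omega by rewrite /omega wp chromatic_colorable.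
have [Q [L [Q_orth A_spec mu_L]]] := symmetric_spectral (adj_matrix_tr R sym) mu_char.
pose col (i : 'I_#|T|) := f (enum_val i).
have A_blocks i j : col i = col j -> adj_matrix R e i j = 0.
  rewrite mxE; case eij: (e _ _) => // col_ij.
  by have := f_proper _ _ eij; rewrite -/(col i) -/(col j) col_ij eqxx.
have ando := ando_lin Q_orth A_spec A_blocks omega_gt0.
have := sum_sqr_spectral Q_orth A_spec; rewrite sum_sqr_adj_matrix // => sum_L.
apply: le_trans (sum_sqr_prefix_le mu_sorted (geq_minl _ _)) _.
rewrite (perm_big _ mu_L) big_image /= ler_pdivlMr ?ltr0n // natrM natrB // sum_L.
nra.
Qed.
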